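(* Let $\psi_\pm(x)=\frac{5\pm\sqrt{25-4x}}{2}$ and $\Psi(x)=\frac32\lim_{l\to\infty}5^l\psi_-^{\,l}(x)$. Let $E$ be the set consisting of the empty sequence $\emptyset$ together with all finite sequences $e=(e_1,\dots,e_N)$, $N\ge1$, with $e_j\in\{+,-\}$ and $e_1=+$; write $|e|$ for the length and $\psi_e=\psi_{e_1}\circ\cdots\circ\psi_{e_{|e|}}$, $\psi_\emptyset=\mathrm{id}$. Fix an integer $m_0$ and an initial value $\lambda_{m_0}\in\{2,5,6\}$, and define for $e\in E$ $$\lambda_e=5^{|e|+m_0}\,\Psi(\psi_e(\lambda_{m_0}))\ \text{ if }\lambda_{m_0}\in\{2,5\},\qquad \lambda_e=5^{|e|+m_0+1}\,\Psi(\psi_e(3))\ \text{ if }\lambda_{m_0}=6,$$ and the counting function $\rho_{m_0}(x)=\#\{e\in E:\lambda_e\le x\}$ for $x>0$. Then there exists a continuous, $\log 5$-periodic function $g:\mathbb{R}\to\mathbb{R}$ such that $$\lim_{x\to\infty}\left(\frac{\rho_{m_0}(x)}{x^{\log2/\log5}}-g(\log x)\right)=0.$$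
   Context: These $\lambda_e$ are exactly the eigenvalues of the Laplacian on the Sierpinski gasket (or on the infinite Sierpinski gasket) of eigenfunctions obtained by spectral decimation from a fixed generation of birth $m_0$ and a fixed initial eigenfunction with initial eigenvalue $\lambda_{m_0}$; each such eigenvalue corresponds to a unique eigenfunction extending the fixed initial one. *)

From Stdlib Require Import Reals Lra ZArith List ClassicalEpsilon.
Open Scope R_scope.

Definition psi_plus (x : R) : R := (5 + sqrt (25 - 4 * x)) / 2.
Definition psi_minus (x : R) : R := (5 - sqrt (25 - 4 * x)) / 2.
Definition psi (b : bool) (x : R) : R := if b then psi_plus x else psi_minus x.

Fixpoint psi_minus_iter (l : nat) (x : R) : R :=
  match l with O => x | S k => psi_minus (psi_minus_iter k x) end.

Definition Psi (x : R) : R :=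
  3 / 2 * epsilon (inhabits 0)
    (fun L => Un_cv (fun l => 5 ^ l * psi_minus_iter l x) L).

(* sign sequences: true = '+', false = '-';
   psi_e = psi_{e1} o ... o psi_{eN} *)
Definition psi_seq (e : list bool) (x : R) : R :=
  fold_right (fun b acc => psi b acc) x e.

Definition inE (e : list bool) : Prop := e = nil \/ exists t, e = true :: t.

Definition lambda_e (m0 : Z) (lam0 : R) (e : list bool) : R :=
  if Req_EM_T lam0 6
  then powerRZ 5 (Z.of_nat (length e) + m0 + 1) * Psi (psi_seq e 3)
  else powerRZ 5 (Z.of_nat (length e) + m0) * Psi (psi_seq e lam0).

Definition count_is (m0 : Z) (lam0 x : R) (n : nat) : Prop :=
  exists l : list (list bool), NoDup l /\ length l = n /\
    forall e, In e l <-> (inE e /\ lambda_e m0 lam0 e <= x).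

Definition rho (m0 : Z) (lam0 x : R) : R :=
  INR (epsilon (inhabits O) (fun n => count_is m0 lam0 x n)).

From Stdlib Require Import Reals Lra Lia ZArith List ClassicalEpsilon FinFun Classical.
Open Scope R_scope.

(* Every lambda_e has the form c 5^|e| Psi (psi_e b0) with c > 0 and b0 in
   [0,5], so lambda_e <= x iff Psi (psi_e b0) <= x / (c 5^|e|).  The proof:
   1. psi_+ and psi_- map [0,5] into two intervals 2 apart and contract by 5;
      Psi exists, satisfies Psi (psi_- z) = Psi z / 5, and has slope >= 3/2.
   2. count N P b counts the words w of length N with P (psi_w b).  For the
      sublevel predicate {Psi <= s} the proportion count / 2^N is Cauchy
      (changing the base point moves a count by at most 1), so it converges
      to density s; density (s/5) = density s / 2 and density is continuous.
   3. profile u = 2^j density (u / 5^j) extends density, satisfies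
      profile (5u) = 2 profile u and is continuous.
   4. Enumerating E level by level shows rho x = count N {Psi <= x/(c 5^N)} b0
      for large N, hence |rho x - profile (x/c)| <= 2.
   5. The theorem follows with g t = exp (-t log2/log5) profile (exp t / c). *)

(* The interval [0,5], which contains every initial value and is invariant
   under both branches psi_+ and psi_-. *)
Definition I5 (u : R) : Prop := 0 <= u <= 5.

Lemma sqrt_facts u : 0 <= u <= 25/4 ->
  0 <= sqrt (25 - 4*u) /\ sqrt (25 - 4*u) * sqrt (25 - 4*u) = 25 - 4*u.
Proof. intros. split; [apply sqrt_pos | apply sqrt_sqrt; lra]. Qed.

Lemma psi_minus_range u : 0 <= u <= 25/4 -> 0 <= psi_minus u <= 5/2.
Proof.
  intros H. unfold psi_minus. destruct (sqrt_facts u H) as [A B].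
  set (S := sqrt (25 - 4*u)) in *. split; nra.
Qed.

Lemma psi_plus_range u : 0 <= u <= 25/4 -> 5/2 <= psi_plus u <= 5.
Proof.
  intros H. unfold psi_plus. destruct (sqrt_facts u H) as [A B].
  set (S := sqrt (25 - 4*u)) in *. split; nra.
Qed.

Lemma psi_range c u : I5 u -> I5 (psi c u).
Proof.
  unfold I5; intros H. destruct c; simpl.
  - destruct (psi_plus_range u); lra.
  - destruct (psi_minus_range u); lra.
Qed.

Lemma psi_gap u u' : I5 u -> I5 u' -> psi_plus u - psi_minus u' > 2.
Proof.
  unfold I5; intros H H'. unfold psi_plus, psi_minus.
  destruct (sqrt_facts u) as [A B]; [lra|]. destruct (sqrt_facts u') as [A' B']; [lra|].
  set (S := sqrt (25 - 4*u)) in *. set (S' := sqrt (25 - 4*u')) in *.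
  assert (S > 2) by nra. assert (S' > 2) by nra. lra.
Qed.

Lemma psi_minus_incr u u' : 0 <= u <= u' -> u' <= 25/4 -> psi_minus u <= psi_minus u'.
Proof.
  intros H H'. unfold psi_minus.
  destruct (sqrt_facts u) as [A B]; [lra|]. destruct (sqrt_facts u') as [A' B']; [lra|].
  set (S := sqrt (25 - 4*u)) in *. set (S' := sqrt (25 - 4*u')) in *. nra.
Qed.

Lemma psi_plus_decr u u' : 0 <= u <= u' -> u' <= 25/4 -> psi_plus u' <= psi_plus u.
Proof.
  intros H H'. unfold psi_plus.
  destruct (sqrt_facts u) as [A B]; [lra|]. destruct (sqrt_facts u') as [A' B']; [lra|].
  set (S := sqrt (25 - 4*u)) in *. set (S' := sqrt (25 - 4*u')) in *. nra.
Qed.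

(* Both branches contract distances on [0,5] by a factor at least 5: they are
   the inverse branches of z |-> z (5 - z), whose slope is at most 5 there. *)
Lemma psi_contract c u u' : I5 u -> I5 u' ->
  Rabs (u - u') <= 5 * Rabs (psi c u - psi c u').
Proof.
  unfold I5; intros H H'.
  destruct (sqrt_facts u) as [A B]; [lra|]. destruct (sqrt_facts u') as [A' B']; [lra|].
  destruct c; simpl; unfold psi_plus, psi_minus;
  set (S := sqrt (25 - 4*u)) in *; set (S' := sqrt (25 - 4*u')) in *;
  assert (S <= 5) by nra; assert (S' <= 5) by nra;
  assert (E : u - u' = (S' - S) * (S' + S) / 4) by (field_simplify; nra);
  rewrite E; unfold Rabs; repeat destruct Rcase_abs; nra.
Qed.

Lemma psi_minus_contract y y' : 0 <= y <= y' -> y' <= 25/4 ->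
  y' - y <= 5 * (psi_minus y' - psi_minus y).
Proof.
  intros H H'. unfold psi_minus.
  destruct (sqrt_facts y) as [A B]; [lra|]. destruct (sqrt_facts y') as [A' B']; [lra|].
  set (S := sqrt (25 - 4*y)) in *. set (S' := sqrt (25 - 4*y')) in *.
  assert (S <= 5) by nra. assert (S' <= S) by nra. nra.
Qed.

Lemma psi_minus_ge y : 0 <= y <= 25/4 -> y <= 5 * psi_minus y.
Proof.
  intros H. unfold psi_minus. destruct (sqrt_facts y H) as [A B].
  set (S := sqrt (25 - 4*y)) in *. nra.
Qed.

Lemma psi_minus_inverse y : 0 <= y <= 25/4 -> psi_minus y * (5 - psi_minus y) = y.
Proof.
  intros H. unfold psi_minus. destruct (sqrt_facts y H) as [A B].
  set (S := sqrt (25 - 4*y)) in *. nra.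
Qed.

Definition scaled_iter (z : R) (l : nat) : R := 5 ^ l * psi_minus_iter l z.

Lemma psi_minus_iter_range l z : 0 <= z <= 25/4 -> 0 <= psi_minus_iter l z <= 25/4.
Proof. intros H; induction l; simpl; auto. destruct (psi_minus_range _ IHl); lra. Qed.

Lemma psi_minus_iter_S l z : psi_minus_iter l (psi_minus z) = psi_minus_iter (S l) z.
Proof. induction l; simpl; auto. rewrite IHl. reflexivity. Qed.

Lemma scaled_iter_incr z : 0 <= z <= 25/4 -> Un_growing (scaled_iter z).
Proof.
  intros H n. unfold scaled_iter. simpl.
  pose proof (psi_minus_ge _ (psi_minus_iter_range n z H)).
  pose proof (pow_lt 5 n ltac:(lra)). nra.
Qed.

(* A Lyapunov-type majorant: 5 majorant(psi_- y) <= majorant y, and y <= majorant y;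
   it bounds the increasing sequence scaled_iter. *)
Definition majorant (y : R) : R := 8 * y / (8 - y).

Lemma majorant_step y : 0 <= y <= 25/4 -> 5 * majorant (psi_minus y) <= majorant y.
Proof.
  intros H. destruct (psi_minus_range y H) as [A B]. pose proof (psi_minus_inverse y H) as F.
  set (v := psi_minus y) in *. unfold majorant.
  assert (K : 40 * v * (8 - y) <= 8 * y * (8 - v)) by (rewrite <- F; nra).
  apply (Rmult_le_reg_r ((8 - v) * (8 - y))); [nra|].
  replace (5 * (8 * v / (8 - v)) * ((8 - v) * (8 - y))) with (40 * v * (8 - y)) by (field; lra).
  replace (8 * y / (8 - y) * ((8 - v) * (8 - y))) with (8 * y * (8 - v)) by (field; lra).
  exact K.
Qed.

Lemma majorant_ge y : 0 <= y <= 25/4 -> y <= majorant y.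
Proof.
  intros H. unfold majorant. apply (Rmult_le_reg_r (8 - y)); [lra|].
  replace (8 * y / (8 - y) * (8 - y)) with (8 * y) by (field; lra). nra.
Qed.

Lemma scaled_iter_bounded z : 0 <= z <= 25/4 -> forall l, scaled_iter z l <= majorant z.
Proof.
  intros H l.
  assert (Hm : forall l, 5 ^ l * majorant (psi_minus_iter l z) <= majorant z).
  { induction l0; simpl; [lra|].
    pose proof (majorant_step _ (psi_minus_iter_range l0 z H)).
    pose proof (pow_lt 5 l0 ltac:(lra)). nra. }
  unfold scaled_iter. pose proof (majorant_ge _ (psi_minus_iter_range l z H)).
  pose proof (Hm l). pose proof (pow_lt 5 l ltac:(lra)). nra.
Qed.

Lemma Psi_spec z : 0 <= z <= 25/4 -> Un_cv (scaled_iter z) (2/3 * Psi z).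
Proof.
  intros H. unfold Psi. replace (2/3 * (3/2 * _)) with
    (epsilon (inhabits 0) (fun L => Un_cv (fun l => 5 ^ l * psi_minus_iter l z) L))
    by field.
  apply epsilon_spec.
  destruct (growing_cv (scaled_iter z) (scaled_iter_incr z H)) as [L HL].
  - exists (majorant z). intros x [i ->]. apply scaled_iter_bounded; auto.
  - exists L; auto.
Qed.

Lemma Psi_psi_minus z : 0 <= z <= 25/4 -> Psi (psi_minus z) = Psi z / 5.
Proof.
  intros H. destruct (psi_minus_range z H).
  assert (C : Un_cv (scaled_iter (psi_minus z)) (2/3 * Psi z / 5)).
  { pose proof (CV_shift' _ 1 _ (Psi_spec z H)) as C.
    intros eps He. destruct (C (5*eps) ltac:(lra)) as [N HN]. exists N. intros n Hn.
    specialize (HN n Hn). unfold scaled_iter, R_dist in *. rewrite psi_minus_iter_S.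
    replace (n+1)%nat with (S n) in HN by lia. simpl in HN |- *.
    apply Rabs_def2 in HN. pose proof (pow_lt 5 n ltac:(lra)). apply Rabs_def1; nra. }
  pose proof (UL_sequence _ _ _ (Psi_spec (psi_minus z) ltac:(lra)) C). lra.
Qed.

Lemma lim_lower_bound u l c : Un_cv u l -> (forall n, c <= u n) -> c <= l.
Proof.
  intros Hu Hc. destruct (Rle_or_lt c l); auto.
  destruct (Hu (c - l) ltac:(lra)) as [N HN]. specialize (HN N (le_n _)).
  specialize (Hc N). unfold R_dist in HN. apply Rabs_def2 in HN. lra.
Qed.

(* The sequence scaled_iter increases from its initial term z. *)
Lemma Psi_ge z : 0 <= z <= 25/4 -> 3/2 * z <= Psi z.
Proof.
  intros H. pose proof (growing_ineq _ _ (scaled_iter_incr z H) (Psi_spec z H) 0).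
  unfold scaled_iter in *; simpl in *; lra.
Qed.

Lemma Psi_slope z z' : 0 <= z <= z' -> z' <= 25/4 -> 3/2 * (z' - z) <= Psi z' - Psi z.
Proof.
  intros H H'.
  assert (K : forall l, psi_minus_iter l z <= psi_minus_iter l z' /\
     z' - z <= 5 ^ l * (psi_minus_iter l z' - psi_minus_iter l z)).
  { induction l; simpl; [lra|]. destruct IHl as [A B].
    destruct (psi_minus_iter_range l z ltac:(lra)) as [Hz _].
    destruct (psi_minus_iter_range l z' ltac:(lra)) as [_ Hz'].
    split; [apply psi_minus_incr; lra|].
    pose proof (psi_minus_contract _ _ (conj Hz A) Hz').
    pose proof (pow_lt 5 l ltac:(lra)). nra. }
  assert (L : z' - z <= 2/3 * Psi z' - 2/3 * Psi z).
  { apply (lim_lower_bound (fun l => scaled_iter z' l - scaled_iter z l)).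
    - apply CV_minus; apply Psi_spec; lra.
    - intros n. unfold scaled_iter. destruct (K n). lra. }
  lra.
Qed.

(* After a psi_+ step, Psi is bounded below: this bounds the length of the
   sequences e with lambda_e <= x and separates the two branches. *)
Lemma Psi_psi_plus_ge u : I5 u -> 15/4 <= Psi (psi_plus u).
Proof.
  unfold I5; intros. destruct (psi_plus_range u); try lra.
  pose proof (Psi_ge (psi_plus u)). lra.
Qed.

(* count N P b = #{ w in {+,-}^N : P (psi_w b) }, recursing on the outermost sign. *)
Fixpoint count (N : nat) (P : R -> bool) (b : R) : nat :=
  match N with
  | O => if P b then 1%nat else 0%nat
  | S N' => (count N' (fun z => P (psi true z)) b + count N' (fun z => P (psi false z)) b)%nat
  end.

Lemma count_inner N P b :
  count (S N) P b = (count N P (psi true b) + count N P (psi false b))%nat.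
Proof.
  revert P. induction N; intros P; [reflexivity|].
  change (count (S (S N)) P b) with
    (count (S N) (fun z => P (psi true z)) b + count (S N) (fun z => P (psi false z)) b)%nat.
  rewrite !IHN. simpl. lia.
Qed.

Lemma count_ext N P P' b : (forall u, I5 u -> P u = P' u) -> I5 b -> count N P b = count N P' b.
Proof.
  revert P P'. induction N; intros P P' H Hb; cbn [count].
  - rewrite H; auto.
  - rewrite (IHN (fun z => P (psi true z)) (fun z => P' (psi true z))),
      (IHN (fun z => P (psi false z)) (fun z => P' (psi false z)));
      auto; intros; apply H, psi_range; auto.
Qed.

Lemma count_const N P (c : bool) b : (forall u, I5 u -> P u = c) -> I5 b ->
  count N P b = if c then (2 ^ N)%nat else 0%nat.
Proof.
  revert P. induction N; intros P H Hb; cbn [count].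
  - rewrite H; auto.
  - rewrite (IHN (fun z => P (psi true z))), (IHN (fun z => P (psi false z)));
      try (intros; apply H, psi_range; auto); auto.
    destruct c; simpl; lia.
Qed.

Lemma count_le_pow N P b : (count N P b <= 2 ^ N)%nat.
Proof.
  revert P. induction N; intros P; cbn [count]; [destruct (P b); simpl; lia|].
  pose proof (IHN (fun z => P (psi true z))). pose proof (IHN (fun z => P (psi false z))).
  rewrite Nat.pow_succ_r'. lia.
Qed.

Lemma count_le_or N P Q Q' b : (forall u, I5 u -> P u = true -> Q u = true \/ Q' u = true) ->
  I5 b -> (count N P b <= count N Q b + count N Q' b)%nat.
Proof.
  revert P Q Q'. induction N; intros P Q Q' H Hb; cbn [count].
  - destruct (P b) eqn:E; [|lia]. destruct (H b Hb E) as [-> | ->]; [lia|]. destruct (Q b); lia.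
  - assert (Hc : forall c u, I5 u -> P (psi c u) = true ->
                   Q (psi c u) = true \/ Q' (psi c u) = true)
      by (intros; apply H; auto; apply psi_range; auto).
    pose proof (IHN (fun z => P (psi true z)) (fun z => Q (psi true z))
                  (fun z => Q' (psi true z)) (Hc true) Hb).
    pose proof (IHN (fun z => P (psi false z)) (fun z => Q (psi false z))
                  (fun z => Q' (psi false z)) (Hc false) Hb).
    lia.
Qed.

Lemma count_mono N P Q b : (forall u, I5 u -> P u = true -> Q u = true) -> I5 b ->
  (count N P b <= count N Q b)%nat.
Proof.
  intros H Hb.
  assert (L : (count N P b <= count N Q b + count N (fun _ => false) b)%nat)
    by (apply count_le_or; auto).
  rewrite (count_const N (fun _ => false) false) in L; auto. lia.
Qed.

Definition monotone_pred (P : R -> bool) : Prop :=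
  (forall u u', 0 <= u -> u <= u' -> u' <= 5 -> P u' = true -> P u = true) \/
  (forall u u', 0 <= u -> u <= u' -> u' <= 5 -> P u = true -> P u' = true).

(* psi_- is increasing and psi_+ decreasing, so both preserve monotonicity. *)
Lemma monotone_pred_psi c P : monotone_pred P -> monotone_pred (fun z => P (psi c z)).
Proof.
  assert (Hord : forall u u', 0 <= u -> u <= u' -> u' <= 5 ->
    psi false u <= psi false u' /\ psi true u' <= psi true u)
    by (intros; simpl; split; [apply psi_minus_incr | apply psi_plus_decr]; lra).
  assert (R : forall c u, 0 <= u <= 5 -> 0 <= psi c u <= 5) by (intros; apply psi_range; auto).
  intros [HP|HP]; destruct c; [right|left|left|right]; intros u u' ? ? ? ?;
    destruct (Hord u u') as [Hm Hp]; auto;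
    pose proof (R true u ltac:(lra)); pose proof (R true u' ltac:(lra));
    pose proof (R false u ltac:(lra)); pose proof (R false u' ltac:(lra));
    [ apply (HP _ (psi true u)) | apply (HP _ (psi false u'))
    | apply (HP (psi true u')) | apply (HP (psi false u)) ]; auto; lra.
Qed.

(* Since every value of psi_- lies below every value of psi_+, a monotone
   predicate is constant on the image of one of the two branches. *)
Lemma monotone_pred_branch P : monotone_pred P ->
  (exists c, forall u, I5 u -> P (psi true u) = c) \/
  (exists c, forall u, I5 u -> P (psi false u) = c).
Proof.
  assert (R : forall c u, I5 u -> 0 <= psi c u <= 5) by (intros; apply psi_range; auto).
  assert (G : forall u u', I5 u -> I5 u' -> psi false u' <= psi true u)
    by (intros u u' Hu Hu'; simpl; pose proof (psi_gap u u' Hu Hu'); lra).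
  intros [HP|HP].
  - destruct (classic (exists u0, I5 u0 /\ P (psi false u0) = false)) as [[u0 [Hu0 E]]|NE].
    + left. exists false. intros u Hu. destruct (P (psi true u)) eqn:E'; auto.
      destruct (R false u0 Hu0), (R true u Hu). pose proof (G u u0 Hu Hu0).
      rewrite (HP _ (psi true u)) in E; auto; lra.
    + right. exists true. intros u Hu. destruct (P (psi false u)) eqn:E'; auto.
      exfalso; apply NE; eauto.
  - destruct (classic (exists u0, I5 u0 /\ P (psi true u0) = false)) as [[u0 [Hu0 E]]|NE].
    + right. exists false. intros u Hu. destruct (P (psi false u)) eqn:E'; auto.
      destruct (R false u Hu), (R true u0 Hu0). pose proof (G u0 u Hu0 Hu).
      rewrite (HP (psi false u)) in E; auto; lra.
    + left. exists true. intros u Hu. destruct (P (psi true u)) eqn:E'; auto.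
      exfalso; apply NE; eauto.
Qed.

(* For a monotone predicate, changing the base point changes the count by at
   most one: at each level only one branch is non-constant. *)
Lemma count_base_change N P b b' : monotone_pred P -> I5 b -> I5 b' ->
  (count N P b <= count N P b' + 1)%nat.
Proof.
  revert P. induction N; intros P HP Hb Hb'; cbn [count]; [destruct (P b), (P b'); lia|].
  pose proof (IHN _ (monotone_pred_psi true P HP) Hb Hb').
  pose proof (IHN _ (monotone_pred_psi false P HP) Hb Hb').
  destruct (monotone_pred_branch P HP) as [[c Hc]|[c Hc]].
  - rewrite !(count_const N (fun z => P (psi true z)) c); auto. lia.
  - rewrite !(count_const N (fun z => P (psi false z)) c); auto. lia.
Qed.

Definition diam_le (P : R -> bool) (D : R) : Prop :=
  forall u u', I5 u -> I5 u' -> P u = true -> P u' = true -> Rabs (u - u') <= D.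

(* A predicate supported on a set of diameter at most 2/5^k only sees one
   branch during the first k levels (the branches are 2 apart and distances
   grow by 5 per level), so it is counted at most 2^n times at level k+n. *)
Lemma count_small_diam k : forall n P b, diam_le P (2 / 5 ^ k) -> I5 b ->
  (count (k + n) P b <= 2 ^ n)%nat.
Proof.
  induction k; intros n P b HD Hb; [apply count_le_pow|].
  change (S k + n)%nat with (S (k + n)). cbn [count].
  pose proof (pow_lt 5 k ltac:(lra)).
  assert (HDc : forall c, diam_le (fun z => P (psi c z)) (2 / 5 ^ k)).
  { intros c u u' Hu Hu' E E'.
    pose proof (HD _ _ (psi_range c u Hu) (psi_range c u' Hu') E E') as Hd.
    pose proof (psi_contract c u u' Hu Hu'). simpl pow in Hd.
    replace (2 / (5 * 5 ^ k)) with ((2 / 5 ^ k) / 5) in Hd by (field; lra). lra. }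
  assert (Hsmall : 2 / (5 * 5 ^ k) <= 2).
  { assert (1 <= 5 ^ k) by (apply pow_R1_Rle; lra).
    apply (Rmult_le_reg_r (5 * 5 ^ k)); [nra|].
    replace (2 / (5 * 5 ^ k) * (5 * 5 ^ k)) with 2 by (field; lra). nra. }
  destruct (classic (exists u0, I5 u0 /\ P (psi true u0) = true)) as [[u0 [Hu0 E]]|NE].
  - rewrite (count_const _ (fun z => P (psi false z)) false); auto.
    + rewrite Nat.add_0_r. apply IHk; auto.
    + intros u Hu. destruct (P (psi false u)) eqn:E'; auto. exfalso.
      pose proof (HD _ _ (psi_range true u0 Hu0) (psi_range false u Hu) E E') as Hd.
      simpl in Hd. pose proof (psi_gap u0 u Hu0 Hu). rewrite Rabs_right in Hd by lra. lra.
  - rewrite (count_const _ (fun z => P (psi true z)) false); auto.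
    + apply IHk; [apply (HDc false)|auto].
    + intros u Hu. destruct (P (psi true u)) eqn:E'; auto. exfalso; apply NE; eauto.
Qed.

Lemma pow_exceeds r y : 1 < r -> exists n, y < r ^ n.
Proof.
  intros Hr. destruct (Pow_x_infinity r ltac:(rewrite Rabs_right; lra) (y + 1)) as [n Hn].
  exists n. specialize (Hn n (le_n _)).
  rewrite Rabs_right in Hn by (left; apply pow_lt; lra). lra.
Qed.

Lemma inv_pow_small r y : 1 < r -> 0 < y -> exists n, / r ^ n < y.
Proof.
  intros Hr Hy. destruct (pow_exceeds r (/ y) Hr) as [n Hn]. exists n.
  rewrite <- (Rinv_inv y). apply Rinv_lt_contravar; auto.
  apply Rmult_lt_0_compat; [apply Rinv_0_lt_compat, Hy | apply pow_lt; lra].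
Qed.

Lemma lim_upper_bound u l c : Un_cv u l -> (forall n, u n <= c) -> l <= c.
Proof.
  intros Hu Hc. enough (- c <= - l) by lra.
  apply (lim_lower_bound (opp_seq u)); [apply CV_opp, Hu|].
  intros n. unfold opp_seq. specialize (Hc n). lra.
Qed.

Lemma cv_const c : Un_cv (fun _ => c) c.
Proof. intros eps He. exists 0%nat. intros n _. unfold R_dist. rewrite Rminus_diag, Rabs_R0. lra. Qed.

Lemma Rabs_le_between x c : Rabs x <= c -> - c <= x <= c.
Proof. unfold Rabs; destruct Rcase_abs; intros; lra. Qed.

Lemma lim_half u l : Un_cv u l -> Un_cv (fun n => u n / 2) (l / 2).
Proof.
  intros Hu eps He. destruct (Hu (2 * eps) ltac:(lra)) as [N HN]. exists N. intros n Hn.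
  specialize (HN n Hn). unfold R_dist in *.
  replace (u n / 2 - l / 2) with ((u n - l) * / 2) by field.
  rewrite Rabs_mult, (Rabs_right (/ 2)) by lra. lra.
Qed.

Definition below (s z : R) : bool := if Rle_dec (Psi z) s then true else false.

Lemma below_monotone s : monotone_pred (below s).
Proof.
  left. intros u u' H1 H2 H3. unfold below. destruct (Rle_dec (Psi u') s); try discriminate.
  intros _. pose proof (Psi_slope u u' (conj H1 H2) ltac:(lra)).
  destruct Rle_dec; auto. lra.
Qed.

(* Points of [0,5] with s < Psi z <= s'; by the slope bound on Psi they form
   a set of diameter at most (2/3)(s' - s). *)
Definition window (s s' z : R) : bool := andb (below s' z) (negb (below s z)).

Lemma window_diam s s' k : s' - s <= 3 / 5 ^ k -> diam_le (window s s') (2 / 5 ^ k).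
Proof.
  intros H u u' Hu Hu' E E'. unfold window, below in E, E'.
  destruct (Rle_dec (Psi u) s'), (Rle_dec (Psi u) s), (Rle_dec (Psi u') s'),
    (Rle_dec (Psi u') s); simpl in E, E'; try discriminate.
  pose proof (pow_lt 5 k ltac:(lra)).
  replace (3 / 5 ^ k) with (3/2 * (2 / 5 ^ k)) in H by (field; lra).
  unfold I5 in *. destruct (Rle_or_lt u u').
  - pose proof (Psi_slope u u' ltac:(lra) ltac:(lra)). rewrite Rabs_left1 by lra. lra.
  - pose proof (Psi_slope u' u ltac:(lra) ltac:(lra)). rewrite Rabs_right by lra. lra.
Qed.

Section Density.

Variable b : R.
Hypothesis Hb : I5 b.

Definition proportion (s : R) (N : nat) : R := INR (count N (below s) b) / 2 ^ N.

(* Splitting off the innermost sign and changing base point costs at most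
   one unit per branch (count_base_change), hence at most 2^-N in proportion. *)
Lemma proportion_step s N : Rabs (proportion s (S N) - proportion s N) <= / 2 ^ N.
Proof.
  unfold proportion. rewrite count_inner, plus_INR.
  assert (D : forall c, Rabs (INR (count N (below s) (psi c b)) - INR (count N (below s) b)) <= 1).
  { intros c. pose proof (psi_range c b Hb) as Hc.
    pose proof (count_base_change N _ _ _ (below_monotone s) Hc Hb) as L1.
    pose proof (count_base_change N _ _ _ (below_monotone s) Hb Hc) as L2.
    apply le_INR in L1, L2. rewrite plus_INR in L1, L2. simpl in L1, L2.
    apply Rabs_le; lra. }
  pose proof (D true) as Dt. pose proof (D false) as Df.
  set (a := INR (count N (below s) (psi true b))) in *.
  set (a' := INR (count N (below s) (psi false b))) in *.
  set (n := INR (count N (below s) b)) in *.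
  pose proof (pow_lt 2 N ltac:(lra)). simpl pow.
  replace ((a + a') / (2 * 2 ^ N) - n / 2 ^ N) with (((a - n) + (a' - n)) / 2 * / 2 ^ N)
    by (field; lra).
  rewrite Rabs_mult, (Rabs_right (/ 2 ^ N)) by (left; apply Rinv_0_lt_compat; lra).
  rewrite <- (Rmult_1_l (/ 2 ^ N)) at 2.
  apply Rmult_le_compat_r; [left; apply Rinv_0_lt_compat; lra|].
  pose proof (Rabs_triang (a - n) (a' - n)).
  unfold Rdiv. rewrite Rabs_mult, (Rabs_right (/2)) by lra. lra.
Qed.

Lemma proportion_cauchy s N k :
  Rabs (proportion s (N + k) - proportion s N) <= 2 / 2 ^ N - 2 / 2 ^ (N + k).
Proof.
  induction k.
  - rewrite Nat.add_0_r. unfold Rminus. rewrite !Rplus_opp_r, Rabs_R0. lra.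
  - rewrite Nat.add_succ_r. pose proof (proportion_step s (N + k)).
    pose proof (Rabs_triang (proportion s (S (N + k)) - proportion s (N + k))
                            (proportion s (N + k) - proportion s N)) as T.
    replace (proportion s (S (N + k)) - proportion s (N + k) + (proportion s (N + k) - proportion s N))
      with (proportion s (S (N + k)) - proportion s N) in T by ring.
    pose proof (pow_lt 2 (N + k) ltac:(lra)). simpl pow.
    replace (2 / (2 * 2 ^ (N + k))) with (2 / 2 ^ (N + k) - / 2 ^ (N + k)) by (field; lra).
    lra.
Qed.

Definition density (s : R) : R :=
  epsilon (inhabits 0) (fun l => Un_cv (proportion s) l).

Lemma density_spec s : Un_cv (proportion s) (density s).
Proof.
  unfold density. apply epsilon_spec.
  destruct (R_complete (proportion s)) as [l Hl]; [|exists l; auto].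
  intros eps He. destruct (inv_pow_small 2 (eps/4) ltac:(lra) ltac:(lra)) as [N HN].
  exists N. intros n n' Hn Hn'. unfold R_dist.
  pose proof (proportion_cauchy s N (n - N)) as C. pose proof (proportion_cauchy s N (n' - N)) as C'.
  replace (N + (n - N))%nat with n in C by lia. replace (N + (n' - N))%nat with n' in C' by lia.
  pose proof (pow_lt 2 n ltac:(lra)). pose proof (pow_lt 2 n' ltac:(lra)).
  assert (0 < 2 / 2 ^ n) by (apply Rdiv_lt_0_compat; lra).
  assert (0 < 2 / 2 ^ n') by (apply Rdiv_lt_0_compat; lra).
  replace (2 / 2 ^ N) with (2 * / 2 ^ N) in C, C' by (unfold Rdiv; ring).
  pose proof (Rabs_triang (proportion s n - proportion s N) (proportion s N - proportion s n')) as T.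
  rewrite (Rabs_minus_sym (proportion s N)) in T.
  replace (proportion s n - proportion s N + (proportion s N - proportion s n'))
    with (proportion s n - proportion s n') in T by ring.
  lra.
Qed.

Lemma density_close s N : Rabs (proportion s N - density s) <= 2 / 2 ^ N.
Proof.
  pose proof (CV_minus _ _ _ _ (CV_shift' _ N _ (density_spec s))
                (cv_const (proportion s N))) as C.
  assert (Hk : forall k, Rabs (proportion s (k + N) - proportion s N) <= 2 / 2 ^ N).
  { intros k. rewrite Nat.add_comm. pose proof (proportion_cauchy s N k).
    pose proof (pow_lt 2 (N + k) ltac:(lra)).
    assert (0 < 2 / 2 ^ (N + k)) by (apply Rdiv_lt_0_compat; lra). lra. }
  rewrite Rabs_minus_sym. apply Rabs_le. split.
  - apply (lim_lower_bound _ _ _ C). intros k. cbv beta. specialize (Hk k).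
    apply Rabs_le_between in Hk. lra.
  - apply (lim_upper_bound _ _ _ C). intros k. cbv beta. specialize (Hk k).
    apply Rabs_le_between in Hk. lra.
Qed.

(* Self-similarity: a word starting with + never satisfies Psi <= s/5 when
   s < 75/4, and a leading - divides Psi by 5. *)
Lemma count_below_scale s N : s < 75/4 ->
  count (S N) (below (s / 5)) b = count N (below s) b.
Proof.
  intros Hs. cbn [count].
  rewrite (count_const N (fun z => below (s / 5) (psi true z)) false); auto.
  - apply count_ext; auto. intros u Hu. unfold below. simpl psi.
    rewrite Psi_psi_minus by (unfold I5 in Hu; lra).
    destruct Rle_dec, Rle_dec; auto; lra.
  - intros u Hu. unfold below. simpl psi. pose proof (Psi_psi_plus_ge u Hu).
    destruct Rle_dec; auto; lra.
Qed.

Lemma density_scale s : s < 75/4 -> density (s / 5) = density s / 2.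
Proof.
  intros Hs. apply (UL_sequence (fun N => proportion (s / 5) (N + 1))).
  - apply CV_shift', density_spec.
  - apply (Un_cv_ext (fun N => proportion s N / 2)); [|apply lim_half, density_spec].
    intros N. unfold proportion. rewrite Nat.add_1_r, count_below_scale by auto.
    simpl pow. field. apply pow_nonzero. lra.
Qed.

(* Modulus of continuity: raising the threshold by at most 3/5^k raises the
   proportion by at most 2^-k, since the extra words are those whose image
   lies in a window of diameter at most 2/5^k (count_small_diam). *)
Lemma proportion_window s s' k n : s <= s' -> s' - s <= 3 / 5 ^ k ->
  0 <= proportion s' (n + k) - proportion s (n + k) <= / 2 ^ k.
Proof.
  intros H1 H2. unfold proportion. rewrite Nat.add_comm.
  assert (A : (count (k + n) (below s) b <= count (k + n) (below s') b)%nat).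
  { apply count_mono; auto. intros u _. unfold below.
    destruct Rle_dec; try discriminate. destruct Rle_dec; auto; lra. }
  assert (B : (count (k + n) (below s') b <=
               count (k + n) (below s) b + count (k + n) (window s s') b)%nat).
  { apply count_le_or; auto. intros u _ Hq. unfold window. rewrite Hq.
    destruct (below s u); auto. }
  pose proof (count_small_diam k n _ b (window_diam s s' k H2) Hb) as C.
  apply le_INR in A, B, C. rewrite plus_INR in B. rewrite pow_INR in C.
  replace (INR 2) with 2 in C by (simpl; lra).
  rewrite pow_add. pose proof (pow_lt 2 k ltac:(lra)). pose proof (pow_lt 2 n ltac:(lra)).
  set (p := INR (count (k + n) (below s) b)) in *.
  set (p' := INR (count (k + n) (below s') b)) in *.
  replace (p' / (2 ^ k * 2 ^ n) - p / (2 ^ k * 2 ^ n)) with ((p' - p) / 2 ^ n * / 2 ^ k)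
    by (field; lra).
  assert (0 <= (p' - p) / 2 ^ n <= 1).
  { split; [apply Rmult_le_pos; [lra | left; apply Rinv_0_lt_compat; lra]|].
    apply (Rmult_le_reg_r (2 ^ n)); [lra|].
    replace ((p' - p) / 2 ^ n * 2 ^ n) with (p' - p) by (field; lra). lra. }
  assert (0 < / 2 ^ k) by (apply Rinv_0_lt_compat; lra).
  split; nra.
Qed.

Lemma density_modulus s s' k : s <= s' -> s' - s <= 3 / 5 ^ k ->
  0 <= density s' - density s <= / 2 ^ k.
Proof.
  intros H1 H2.
  pose proof (CV_minus _ _ _ _ (CV_shift' _ k _ (density_spec s'))
                (CV_shift' _ k _ (density_spec s))) as C.
  split.
  - apply (lim_lower_bound _ _ _ C). intros n. apply proportion_window; auto.
  - apply (lim_upper_bound _ _ _ C). intros n. apply proportion_window; auto.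
Qed.

Lemma density_cont s : continuity_pt density s.
Proof.
  intros eps He.
  destruct (inv_pow_small 2 eps ltac:(lra) He) as [k Hk].
  exists (3 / 5 ^ k). split; [apply Rdiv_lt_0_compat; [lra | apply pow_lt; lra]|].
  intros x [_ Hx]. simpl in *. unfold Rdist in *.
  destruct (Rle_or_lt s x).
  - rewrite Rabs_right in Hx by lra. pose proof (density_modulus s x k H ltac:(lra)).
    rewrite Rabs_right; lra.
  - rewrite Rabs_left in Hx by lra. pose proof (density_modulus x s k ltac:(lra) ltac:(lra)).
    rewrite Rabs_left1; lra.
Qed.

End Density.

Lemma scale_index_exists u : exists j, u / 5 ^ j < 75/4.
Proof.
  destruct (pow_exceeds 5 u ltac:(lra)) as [j Hj]. exists j.
  pose proof (pow_lt 5 j ltac:(lra)).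
  apply (Rmult_lt_reg_r (5 ^ j)); [lra|].
  replace (u / 5 ^ j * 5 ^ j) with u by (field; lra). lra.
Qed.

Lemma scale_index_mono u j k : u / 5 ^ j < 75/4 -> u / 5 ^ (j + k) < 75/4.
Proof.
  intros H. induction k; [rewrite Nat.add_0_r; auto|].
  rewrite Nat.add_succ_r. pose proof (pow_lt 5 (j + k) ltac:(lra)). simpl pow.
  replace (u / (5 * 5 ^ (j + k))) with ((u / 5 ^ (j + k)) / 5) by (field; lra).
  destruct (Rle_or_lt 0 (u / 5 ^ (j + k))); lra.
Qed.

(* Some j with u/5^j below the threshold 75/4 where density_scale applies. *)
Definition scale_index (u : R) : nat :=
  epsilon (inhabits 0%nat) (fun j => u / 5 ^ j < 75/4).

Lemma scale_index_spec u : u / 5 ^ scale_index u < 75/4.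
Proof. unfold scale_index. apply epsilon_spec, scale_index_exists. Qed.

Section Profile.

Variable b : R.
Hypothesis Hb : I5 b.

(* The extension of density to all thresholds by the scaling law
   density (s/5) = density s / 2: profile u = 2^j density (u/5^j). *)
Definition profile (u : R) : R :=
  2 ^ scale_index u * density b (u / 5 ^ scale_index u).

Lemma profile_shift u j k : u / 5 ^ j < 75/4 ->
  2 ^ (j + k) * density b (u / 5 ^ (j + k)) = 2 ^ j * density b (u / 5 ^ j).
Proof.
  intros H. induction k; [rewrite Nat.add_0_r; auto|].
  rewrite Nat.add_succ_r, <- IHk. simpl pow.
  pose proof (pow_lt 5 (j + k) ltac:(lra)).
  replace (u / (5 * 5 ^ (j + k))) with ((u / 5 ^ (j + k)) / 5) by (field; lra).
  rewrite density_scale by (auto; apply scale_index_mono; auto). field.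
Qed.

Lemma profile_eq u j : u / 5 ^ j < 75/4 -> profile u = 2 ^ j * density b (u / 5 ^ j).
Proof.
  intros H. unfold profile. pose proof (scale_index_spec u).
  destruct (Nat.le_ge_cases j (scale_index u)).
  - replace (scale_index u) with (j + (scale_index u - j))%nat by lia.
    apply profile_shift; auto.
  - replace j with (scale_index u + (j - scale_index u))%nat by lia.
    symmetry. apply profile_shift; auto.
Qed.

Lemma profile_scale u : profile (5 * u) = 2 * profile u.
Proof.
  destruct (scale_index_exists u) as [j Hj]. pose proof (pow_lt 5 j ltac:(lra)).
  assert (E : 5 * u / 5 ^ S j = u / 5 ^ j) by (simpl pow; field; lra).
  rewrite (profile_eq u j Hj), (profile_eq (5 * u) (S j)) by (rewrite E; auto).
  rewrite E. simpl pow. ring.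
Qed.

(* Near u0 one fixed index works, so profile is locally a rescaled density. *)
Lemma profile_cont u0 : continuity_pt profile u0.
Proof.
  destruct (scale_index_exists (Rabs u0 + 1)) as [j Hj].
  pose proof (pow_lt 5 j ltac:(lra)).
  apply continuity_pt_locally_ext with (f := fun u => 2 ^ j * density b (u / 5 ^ j)) (a := 1);
    [lra| |].
  - intros y Hy. symmetry. apply profile_eq. unfold Rdist in Hy.
    pose proof (Rabs_triang_inv y u0). pose proof (Rle_abs y).
    assert (y / 5 ^ j <= (Rabs u0 + 1) / 5 ^ j).
    { unfold Rdiv. apply Rmult_le_compat_r; [left; apply Rinv_0_lt_compat|]; lra. }
    lra.
  - apply continuity_pt_mult with (f1 := fun _ => 2 ^ j) (f2 := fun u => density b (u / 5 ^ j)).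
    + apply continuity_pt_const. intros x y; auto.
    + apply continuity_pt_comp with (f1 := fun u => u / 5 ^ j) (f2 := density b).
      * apply derivable_continuous_pt. unfold Rdiv.
        apply derivable_pt_mult with (f1 := id) (f2 := fun _ => / 5 ^ j).
        -- apply derivable_pt_id.
        -- apply derivable_pt_const.
      * apply density_cont; auto.
Qed.

End Profile.

Fixpoint words (n : nat) : list (list bool) :=
  match n with
  | O => nil :: nil
  | S n' => map (cons true) (words n') ++ map (cons false) (words n')
  end.

Lemma words_in n w : In w (words n) <-> length w = n.
Proof.
  revert w; induction n; intros w; simpl.
  - split; [intros [<-|[]]; auto | destruct w; simpl; try discriminate; auto].
  - rewrite in_app_iff, !in_map_iff. split.
    + intros [[x [<- Hx]]|[x [<- Hx]]]; simpl; f_equal; apply IHn; auto.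
    + destruct w as [|[|] w]; simpl; try discriminate; intros H; injection H; intros;
        [left|right]; exists w; split; auto; apply IHn; auto.
Qed.

Lemma words_nodup n : NoDup (words n).
Proof.
  induction n; simpl; [constructor; auto; constructor|].
  apply NoDup_app; try (apply Injective_map_NoDup; auto; intros x y H; injection H; auto).
  intros a H1 H2. apply in_map_iff in H1, H2.
  destruct H1 as [x [<- _]], H2 as [y [H _]]. discriminate.
Qed.

Lemma filter_map_length {A B} (f : B -> bool) (g : A -> B) l :
  length (filter f (map g l)) = length (filter (fun x => f (g x)) l).
Proof. induction l; simpl; auto. destruct (f (g a)); simpl; auto. Qed.

Lemma count_words N P b : length (filter (fun w => P (psi_seq w b)) (words N)) = count N P b.
Proof.
  revert P; induction N; intros P; [simpl; destruct (P b); auto|].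
  cbn [words count]. rewrite filter_app, length_app, !filter_map_length.
  rewrite <- (IHN (fun z => P (psi true z)) ), <- (IHN (fun z => P (psi false z))).
  reflexivity.
Qed.

Definition words_upto (N : nat) : list (list bool) := flat_map words (seq 0 (S N)).

Lemma words_upto_in N e : In e (words_upto N) <-> (length e <= N)%nat.
Proof.
  unfold words_upto. rewrite in_flat_map. split.
  - intros [k [Hk He]]. apply in_seq in Hk. apply words_in in He. lia.
  - intros H. exists (length e). split; [apply in_seq; lia | apply words_in; auto].
Qed.

Lemma words_upto_nodup N : NoDup (words_upto N).
Proof.
  unfold words_upto. generalize 0%nat as a. induction (S N) as [|n IH]; intros a; simpl;
    [constructor|].
  apply NoDup_app; auto; [apply words_nodup|]. intros e H1 H2. apply words_in in H1.
  apply in_flat_map in H2. destruct H2 as [k [Hk He]].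
  apply in_seq in Hk. apply words_in in He. lia.
Qed.

Lemma words_upto_S N : words_upto (S N) = words_upto N ++ words (S N).
Proof.
  unfold words_upto. rewrite (seq_S (S N)), flat_map_app. simpl. rewrite app_nil_r. auto.
Qed.

Definition inEb (e : list bool) : bool :=
  match e with nil => true | true :: _ => true | false :: _ => false end.

Lemma inEb_spec e : inE e <-> inEb e = true.
Proof.
  unfold inE. destruct e as [|[|] t]; simpl; split; auto; intros H; eauto.
  - destruct H as [H|[t' H]]; discriminate.
  - discriminate.
Qed.

Lemma count_is_unique m0 lam0 x n1 n2 :
  count_is m0 lam0 x n1 -> count_is m0 lam0 x n2 -> n1 = n2.
Proof.
  intros [l1 [N1 [L1 I1]]] [l2 [N2 [L2 I2]]]. subst.
  apply Nat.le_antisymm; apply NoDup_incl_length; auto; intros e He;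
    [apply I2, I1 | apply I1, I2]; auto.
Qed.

Lemma psi_seq_range e b : I5 b -> I5 (psi_seq e b).
Proof. intros Hb; induction e; simpl; auto. apply psi_range; auto. Qed.

Lemma below_psi_minus s u : I5 u -> below (s / 5) (psi false u) = below s u.
Proof.
  intros Hu. unfold below. simpl psi. rewrite Psi_psi_minus by (unfold I5 in Hu; lra).
  destruct Rle_dec, Rle_dec; auto; lra.
Qed.

Section Counting.

Variables (m0 : Z) (lam0 b0 c : R).
Hypothesis Hb : I5 b0.
Hypothesis Hc : 0 < c.
Hypothesis Hlam : forall e, lambda_e m0 lam0 e = c * 5 ^ length e * Psi (psi_seq e b0).

Lemma lambda_le_below e x :
  (if Rle_dec (lambda_e m0 lam0 e) x then true else false) =
  below (x / c / 5 ^ length e) (psi_seq e b0).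
Proof.
  unfold below. rewrite Hlam. pose proof (pow_lt 5 (length e) ltac:(lra)).
  assert (E : c * 5 ^ length e * Psi (psi_seq e b0) <= x <->
              Psi (psi_seq e b0) <= x / c / 5 ^ length e).
  { split; intros H1.
    - apply (Rmult_le_reg_l (c * 5 ^ length e)); [nra|].
      replace (c * 5 ^ length e * (x / c / 5 ^ length e)) with x by (field; lra). lra.
    - apply (Rmult_le_compat_l (c * 5 ^ length e)) in H1; [|nra].
      replace (c * 5 ^ length e * (x / c / 5 ^ length e)) with x in H1 by (field; lra). lra. }
  destruct Rle_dec, Rle_dec; tauto.
Qed.

Definition selected (x : R) (e : list bool) : bool :=
  andb (inEb e) (if Rle_dec (lambda_e m0 lam0 e) x then true else false).

(* At level N+1 the
   new elements start with +, and the words starting with - reproduce the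
   count at level N because psi_- divides Psi by 5. *)
Lemma selected_count x N :
  length (filter (selected x) (words_upto N)) = count N (below (x / c / 5 ^ N)) b0.
Proof.
  induction N.
  - unfold selected. simpl. rewrite lambda_le_below. simpl. destruct (below _ b0); auto.
  - rewrite words_upto_S, filter_app, length_app, IHN.
    cbn [words count]. rewrite filter_app, length_app, !filter_map_length.
    assert (Hneg : length (filter (fun w => selected x (false :: w)) (words N)) = 0%nat)
      by (unfold selected; simpl; induction (words N); simpl; auto).
    assert (Hpos : length (filter (fun w => selected x (true :: w)) (words N)) =
            count N (fun z => below (x / c / 5 ^ S N) (psi true z)) b0).
    { rewrite <- count_words. f_equal. apply filter_ext_in. intros w Hw.
      apply words_in in Hw. unfold selected. simpl inEb.
      rewrite lambda_le_below. simpl length. rewrite Hw. reflexivity. }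
    assert (Hscale : x / c / 5 ^ S N = (x / c / 5 ^ N) / 5)
      by (pose proof (pow_lt 5 N ltac:(lra)); simpl pow; field; lra).
    rewrite Hneg, Hpos, Nat.add_0_r, Nat.add_comm. f_equal.
    rewrite Hscale. apply count_ext; auto. intros u Hu. symmetry. apply below_psi_minus; auto.
Qed.

(* Every element of E other than the empty word starts with +, so
   lambda_e >= (15/4) c 5^|e|: only finitely many lambda_e lie below x. *)
Lemma length_bound x : exists K, forall e, inE e -> lambda_e m0 lam0 e <= x -> (length e <= K)%nat.
Proof.
  destruct (pow_exceeds 5 (x / (c * (15/4))) ltac:(lra)) as [K HK]. exists K.
  intros e HE Hl. destruct (le_lt_dec (length e) K); auto. exfalso.
  destruct HE as [->|[t ->]]; [simpl in *; lia|].
  rewrite Hlam in Hl. simpl psi_seq in Hl. simpl psi in Hl.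
  pose proof (Psi_psi_plus_ge _ (psi_seq_range t b0 Hb)).
  pose proof (Rle_pow 5 K (length (true :: t)) ltac:(lra) ltac:(lia)).
  pose proof (pow_lt 5 K ltac:(lra)).
  assert (x < c * 5 ^ K * (15/4)).
  { apply (Rmult_lt_reg_r (/ (c * (15/4)))); [apply Rinv_0_lt_compat; nra|].
    replace (c * 5 ^ K * (15/4) * / (c * (15/4))) with (5 ^ K) by (field; lra).
    unfold Rdiv in HK. lra. }
  set (L := 5 ^ length (true :: t)) in *. set (P := Psi (psi_plus (psi_seq t b0))) in *.
  assert (c * L * (15/4) <= c * L * P) by (apply Rmult_le_compat_l; nra).
  assert (c * 5 ^ K <= c * L) by (apply Rmult_le_compat_l; lra). nra.
Qed.

Lemma count_is_level x N : (forall e, inE e -> lambda_e m0 lam0 e <= x -> (length e <= N)%nat) ->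
  count_is m0 lam0 x (count N (below (x / c / 5 ^ N)) b0).
Proof.
  intros HK. exists (filter (selected x) (words_upto N)). split; [|split].
  - apply NoDup_filter, words_upto_nodup.
  - apply selected_count.
  - intros e. rewrite filter_In, words_upto_in. unfold selected.
    rewrite Bool.andb_true_iff, <- inEb_spec. split.
    + intros [_ [H1 H2]]. destruct Rle_dec; try discriminate; auto.
    + intros [H1 H2]. split; [apply HK; auto|]. split; auto. destruct Rle_dec; auto.
Qed.

Lemma count_is_exists x : exists n, count_is m0 lam0 x n.
Proof.
  destruct (length_bound x) as [K HK]. eexists. apply count_is_level, HK.
Qed.

(* rho is within 2 of profile (x / c): at a level N where x/c/5^N is below
   75/4, rho(x) = 2^N proportion and profile(x/c) = 2^N density. *)
Lemma rho_near_profile x : Rabs (rho m0 lam0 x - profile b0 (x / c)) <= 2.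
Proof.
  destruct (length_bound x) as [K HK]. destruct (scale_index_exists (x / c)) as [j Hj].
  set (N := max K j).
  assert (VN : x / c / 5 ^ N < 75/4).
  { unfold N. replace (max K j) with (j + (max K j - j))%nat by lia.
    apply scale_index_mono; auto. }
  assert (Hrho : rho m0 lam0 x = INR (count N (below (x / c / 5 ^ N)) b0)).
  { unfold rho. f_equal. apply (count_is_unique m0 lam0 x).
    - apply epsilon_spec, count_is_exists.
    - apply count_is_level. intros e H1 H2. pose proof (HK e H1 H2). lia. }
  rewrite Hrho, (profile_eq b0 Hb _ N VN).
  pose proof (density_close b0 Hb (x / c / 5 ^ N) N) as C. unfold proportion in C.
  pose proof (pow_lt 2 N ltac:(lra)).
  set (n := INR (count N (below (x / c / 5 ^ N)) b0)) in *.
  set (g := density b0 (x / c / 5 ^ N)) in *.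
  replace (n / 2 ^ N - g) with ((n - 2 ^ N * g) * / 2 ^ N) in C by (field; lra).
  rewrite Rabs_mult, (Rabs_right (/ 2 ^ N)) in C by (left; apply Rinv_0_lt_compat; lra).
  apply (Rmult_le_reg_r (/ 2 ^ N)); [apply Rinv_0_lt_compat; lra|].
  replace (2 * / 2 ^ N) with (2 / 2 ^ N) by (unfold Rdiv; ring). lra.
Qed.

End Counting.

Lemma lambda_e_form m0 lam0 : lam0 = 2 \/ lam0 = 5 \/ lam0 = 6 ->
  exists b0 c, I5 b0 /\ 0 < c /\
    forall e, lambda_e m0 lam0 e = c * 5 ^ length e * Psi (psi_seq e b0).
Proof.
  intros Hlam0.
  assert (Hpow : forall k n, powerRZ 5 (Z.of_nat n + k) = powerRZ 5 k * 5 ^ n)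
    by (intros; rewrite powerRZ_add, pow_powerRZ by lra; ring).
  unfold lambda_e. destruct (Req_EM_T lam0 6) as [E|E].
  - exists 3, (powerRZ 5 (m0 + 1)). split; [unfold I5; lra|].
    split; [apply powerRZ_lt; lra|]. intros e. rewrite <- Hpow, Z.add_assoc. reflexivity.
  - exists lam0, (powerRZ 5 m0). split; [unfold I5; lra|].
    split; [apply powerRZ_lt; lra|]. intros e. rewrite Hpow. reflexivity.
Qed.

Definition spectral_exponent : R := ln 2 / ln 5.

Lemma spectral_exponent_pos : 0 < spectral_exponent.
Proof.
  assert (0 < ln 2) by (rewrite <- ln_1; apply ln_increasing; lra).
  assert (0 < ln 5) by (rewrite <- ln_1; apply ln_increasing; lra).
  apply Rdiv_lt_0_compat; auto.
Qed.

Section LogPeriodic.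

Variables (h : R -> R) (c : R).
Hypothesis Hc : 0 < c.

(* A function h with h (5u) = 2 h(u), read in logarithmic scale and
   normalised by x^(log 2 / log 5), is log 5-periodic. *)
Definition log_periodic (t : R) : R := exp (- (spectral_exponent * t)) * h (exp t / c).

Lemma log_periodic_cont : (forall u, continuity_pt h u) -> continuity log_periodic.
Proof.
  intros Hh t. unfold log_periodic.
  apply continuity_pt_mult with (f1 := fun t => exp (- (spectral_exponent * t)))
                                (f2 := fun t => h (exp t / c)).
  - apply continuity_pt_comp with (f1 := fun t => - (spectral_exponent * t)) (f2 := exp).
    + apply continuity_pt_opp with (f := fun t => spectral_exponent * t).
      apply continuity_pt_mult with (f1 := fun _ => spectral_exponent) (f2 := id).
      * apply continuity_pt_const; intros ? ?; auto.
      * apply derivable_continuous_pt, derivable_pt_id.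
    + apply derivable_continuous_pt, derivable_pt_exp.
  - apply continuity_pt_comp with (f1 := fun t => exp t / c) (f2 := h); auto.
    apply continuity_pt_mult with (f1 := exp) (f2 := fun _ => / c).
    + apply derivable_continuous_pt, derivable_pt_exp.
    + apply continuity_pt_const; intros ? ?; auto.
Qed.

Lemma log_periodic_period : (forall u, h (5 * u) = 2 * h u) ->
  forall t, log_periodic (t + ln 5) = log_periodic t.
Proof.
  intros Hh t. unfold log_periodic.
  rewrite (exp_plus t (ln 5)), (exp_ln 5) by lra.
  replace (exp t * 5 / c) with (5 * (exp t / c)) by (field; lra). rewrite Hh.
  replace (- (spectral_exponent * (t + ln 5))) with (- (spectral_exponent * t) + - ln 2)
    by (unfold spectral_exponent; field;
        assert (0 < ln 5) by (rewrite <- ln_1; apply ln_increasing; lra); lra).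
  rewrite exp_plus, (exp_Ropp (ln 2)), (exp_ln 2) by lra. field.
Qed.

(* A function within bounded distance of h (x/c) has the same normalised
   asymptotics, because x^(log 2 / log 5) tends to infinity. *)
Lemma log_periodic_approx (r : R -> R) : (forall x, 0 < x -> Rabs (r x - h (x / c)) <= 2) ->
  forall eps, 0 < eps -> exists M, forall x, M < x ->
    Rabs (r x / Rpower x spectral_exponent - log_periodic (ln x)) < eps.
Proof.
  intros Hr eps He. pose proof spectral_exponent_pos as Hd.
  exists (exp (ln (2 / eps) / spectral_exponent)). intros x Hx.
  pose proof (exp_pos (ln (2 / eps) / spectral_exponent)).
  assert (Hx0 : 0 < x) by lra.
  assert (Hbig : 2 / eps < Rpower x spectral_exponent).
  { unfold Rpower. rewrite <- (exp_ln (2 / eps)) by (apply Rdiv_lt_0_compat; lra).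
    apply exp_increasing. apply ln_increasing in Hx; [|auto].
    rewrite ln_exp in Hx. apply (Rmult_lt_compat_l spectral_exponent) in Hx; auto.
    replace (spectral_exponent * (ln (2 / eps) / spectral_exponent)) with (ln (2 / eps))
      in Hx by (field; lra). lra. }
  set (E := Rpower x spectral_exponent) in *.
  assert (HE : 0 < E) by (unfold E, Rpower; apply exp_pos).
  unfold log_periodic. rewrite exp_ln by lra. rewrite exp_Ropp.
  replace (exp (spectral_exponent * ln x)) with E by reflexivity.
  replace (r x / E - / E * h (x / c)) with ((r x - h (x / c)) * / E) by (field; lra).
  rewrite Rabs_mult, (Rabs_right (/ E)) by (left; apply Rinv_0_lt_compat; lra).
  apply (Rmult_lt_reg_r E); auto. rewrite Rmult_assoc, Rinv_l by lra.
  pose proof (Hr x Hx0).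
  apply (Rmult_lt_compat_l eps) in Hbig; auto.
  replace (eps * (2 / eps)) with 2 in Hbig by (field; lra). lra.
Qed.

End LogPeriodic.

Theorem proposition5p3 (m0 : Z) (lam0 : R)
  (Hlam0 : lam0 = 2 \/ lam0 = 5 \/ lam0 = 6) :
  (forall x, 0 < x -> exists n, count_is m0 lam0 x n) /\
  exists g : R -> R,
    continuity g /\ (forall t, g (t + ln 5) = g t) /\
    forall eps, 0 < eps -> exists M, forall x, M < x ->
      Rabs (rho m0 lam0 x / Rpower x (ln 2 / ln 5) - g (ln x)) < eps.
Proof.
  destruct (lambda_e_form m0 lam0 Hlam0) as [b0 [c [Hb [Hc Hlam]]]].
  split.
  - intros x _. apply (count_is_exists m0 lam0 b0 c Hb Hc Hlam).
  - exists (log_periodic (profile b0) c). split; [|split].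
    + apply log_periodic_cont; auto. intros u. apply profile_cont, Hb.
    + apply log_periodic_period; auto. intros u. apply profile_scale, Hb.
    + apply (log_periodic_approx (profile b0) c (rho m0 lam0)).
      intros x _. apply (rho_near_profile m0 lam0 b0 c Hb Hc Hlam).
Qed.
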